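(* Let $f:\mathbb{R}\to\mathbb{R}$ be continuous, and let $(x_n)_{n\in\mathbb{N}}\subseteq\mathcal{E}$ and $x\in\mathcal{E}$ with $x_n\to x$ in unbounded order (uo). Then $f\circ x_n\to f\circ x$ in unbounded order in $\mathcal{E}^u$.
   Context: Let $\mathcal{E}$ be an order complete vector lattice with a weak order unit $E$, $K$ its Stone space (extremally disconnected compact Hausdorff), and $C^\infty(K)$ the vector lattice of continuous functions $K\to[-\infty,\infty]$ finite off a nowhere dense set (identified when equal off a nowhere dense set), which is the universal completion $\mathcal{E}^u$. Fix a Maeda–Ogasawara representation of $\mathcal{E}$ as an order dense ideal of $C^\infty(K)$ with $E$ corresponding to $\mathbf{1}$. For continuous $f:\mathbb{R}\to\mathbb{R}$ and $X\in C^\infty(K)$, $f\circ X$ denotes the unique element of $C^\infty(K)$ agreeing with $\omega\mapsto f(X(\omega))$ on the open dense set where $X$ is finite (by the paper's main theorem, this coincides with the Daniell functional calculus $f(X)$). A sequence $(y_n)$ in a vector lattice $F$ converges in unbounded order (uo) to $y$ if $|y_n-y|\wedge u\to0$ in order for every $u\in F_+$. *)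

From HB Require Import structures.
From mathcomp Require Import all_boot all_order all_algebra.
From mathcomp Require Import all_classical all_reals all_analysis.
From Stdlib Require Import ClassicalEpsilon.
Set Implicit Arguments. Unset Strict Implicit. Unset Printing Implicit Defensive.
Import Order.TTheory GRing.Theory Num.Theory.
Import numFieldNormedType.Exports.
Local Open Scope classical_set_scope.
Local Open Scope ring_scope.

Definition extremally_disconnected (K : topologicalType) : Prop :=
  forall U : set K, open U -> open (closure U).

Definition nowhere_dense (K : topologicalType) (A : set K) : Prop :=
  (closure A)° = set0.

Section Cinfty.
Context (R : realType) (K : topologicalType).

(* C^oo(K): continuous functions K -> [-oo,+oo] that are finite off a nowhere
   dense set.  On an extremally disconnected compact Hausdorff K, each class
   "modulo equality off a nowhere dense set" contains exactly one continuous
   representative, so we identify C^oo(K) with this set of functions. *)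
Definition Cinf : set (K -> \bar R) :=
  [set X | continuous X /\
           nowhere_dense [set w | X w = +oo%E \/ X w = -oo%E]].

Definition cinf_choose (P : set (K -> \bar R)) : K -> \bar R :=
  epsilon (inhabits (fun _ => 0%E)) P.

(* vector operations of C^oo(K): defined on the (dense) set where the
   operands are finite, and extended (uniquely) to an element of C^oo(K) *)
Definition cinf_add (X Y : K -> \bar R) : K -> \bar R :=
  cinf_choose [set Z | Cinf Z /\ forall w, X w \is a fin_num ->
                 Y w \is a fin_num -> Z w = (X w + Y w)%E].

Definition cinf_sub (X Y : K -> \bar R) : K -> \bar R :=
  cinf_choose [set Z | Cinf Z /\ forall w, X w \is a fin_num ->
                 Y w \is a fin_num -> Z w = (X w - Y w)%E].

Definition cinf_scale (c : R) (X : K -> \bar R) : K -> \bar R :=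
  fun w => (c%:E * X w)%E.

Definition cinf_comp (f : R -> R) (X : K -> \bar R) : K -> \bar R :=
  cinf_choose [set Z | Cinf Z /\ forall w, X w \is a fin_num ->
                 Z w = (f (fine (X w)))%:E].

Definition order_dense_ideal (E : set (K -> \bar R)) : Prop :=
  E `<=` Cinf /\
      E (fun _ => 0%E) /\
      (forall X Y, E X -> E Y -> E (cinf_add X Y)) /\
      (forall c X, E X -> E (cinf_scale c X)) /\
      (forall X Y, Cinf Y -> E X -> (forall w, (`|Y w| <= `|X w|)%E) -> E Y) /\
      (forall Y, Cinf Y -> (forall w, (0 <= Y w)%E) -> (exists w, Y w != 0%E) ->
         exists2 X, E X & [/\ forall w, (0 <= X w)%E, forall w, (X w <= Y w)%E
                             & exists w, X w != 0%E]).

(* order convergence to 0 in the vector lattice F (a sublattice of C^oo(K),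
   pointwise order): |s n| is eventually dominated by a decreasing net y in F
   with inf_F y = 0 *)
Definition order_null (F : set (K -> \bar R)) (s : nat -> K -> \bar R) : Prop :=
  exists (D : Type) (leD : D -> D -> Prop) (y : D -> K -> \bar R),
    inhabited D /\
    (forall a, leD a a) /\
    (forall a b c, leD a b -> leD b c -> leD a c) /\
    (forall a b, exists c, leD a c /\ leD b c) /\
    (forall a, F (y a)) /\
    (forall a b, leD a b -> forall w, (y b w <= y a w)%E) /\
    (forall a w, (0 <= y a w)%E) /\
    (forall h, F h -> (forall a w, (h w <= y a w)%E) -> forall w, (h w <= 0)%E) /\
    (forall a, exists n0, forall n, (n0 <= n)%N -> forall w, (`|s n w| <= y a w)%E).

Definition uo_conv (F : set (K -> \bar R)) (a : nat -> K -> \bar R)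
    (b : K -> \bar R) : Prop :=
  forall u, F u -> (forall w, (0 <= u w)%E) ->
    order_null F (fun n w => Order.min `|cinf_sub (a n) b w|%E (u w)).

End Cinfty.

From HB Require Import structures.
From mathcomp Require Import all_boot all_order all_algebra.
From mathcomp Require Import all_classical all_reals all_analysis.
From Stdlib Require Import ClassicalEpsilon.
From mathcomp Require Import lra.
Import Order.TTheory GRing.Theory Num.Theory.
Import numFieldNormedType.Exports.
Local Open Scope classical_set_scope.
Local Open Scope ring_scope.
Set Implicit Arguments. Unset Strict Implicit. Unset Printing Implicit Defensive.

(* An element of C^oo(K) is continuous and finite on
   a dense open set, and on an extremally disconnected space a function that is
   continuous on a dense open set extends continuously (its upper and lower
   envelopes agree); this realises x_n - x and f o x_n - f o x.  Order
   convergence to 0 of continuous functions is then a local property: an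
   order null sequence is eventually small on a nonempty open subset of every
   nonempty open set (otherwise a multiple of the indicator of a clopen set
   would bound the dominating net from below), and conversely a locally small
   sequence below u is dominated by the net of functions equal to del on the
   regular closed sets where s_n <= del eventually and to u elsewhere, whose
   infimum is 0.  Local smallness passes from x_n - x to f o x_n - f o x by
   continuity of f at a finite value of x. *)

Section ereal_valued_continuity.
Context (R : realType) (K : topologicalType).
Implicit Types (X Z : K -> \bar R) (w : K).

Lemma continuous_near_gt X w (a : \bar R) : {for w, continuous X} ->
  (a < X w)%E -> \forall v \near w, (a < X v)%E.
Proof.
move=> cX aX; apply: (cX [set y | (a < y)%E]).
by apply: open_nbhs_nbhs; split => //; exact: open_ereal_gt_ereal.
Qed.

Lemma continuous_near_lt X w (a : \bar R) : {for w, continuous X} ->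
  (X w < a)%E -> \forall v \near w, (X v < a)%E.
Proof.
move=> cX Xa; apply: (cX [set y | (y < a)%E]).
by apply: open_nbhs_nbhs; split => //; exact: open_ereal_lt_ereal.
Qed.

Lemma continuous_open_gt X (a : \bar R) : continuous X -> open [set w | (a < X w)%E].
Proof. by move=> cX; rewrite openE => w /= aX; exact: continuous_near_gt (cX w) aX. Qed.

Lemma continuous_open_lt X (a : \bar R) : continuous X -> open [set w | (X w < a)%E].
Proof. by move=> cX; rewrite openE => w /= Xa; exact: continuous_near_lt (cX w) Xa. Qed.

Lemma ereal_dense (a b : \bar R) : (a < b)%E -> exists c, (a < c < b)%E.
Proof.
case: a => [r| |]; case: b => [s| |] //= ab.
- by exists ((r + s) / 2)%:E; move: ab; rewrite !lte_fin => /midf_lt[-> ->].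
- by exists (r + 1)%:E; rewrite !lte_fin ltrDl ltr01 ltey.
- by exists (s - 1)%:E; rewrite !lte_fin gtrDl ltrN10 ltNyr.
- by exists 0%E; rewrite ltNy0 lt0y.
Qed.

Lemma continuous_from_rays Z w :
  (forall a, (a < Z w)%E -> \forall v \near w, (a < Z v)%E) ->
  (forall b, (Z w < b)%E -> \forall v \near w, (Z v < b)%E) ->
  {for w, continuous Z}.
Proof.
move=> Zgt Zlt U /=; rewrite itv_nbhsE => -[i [oi wi] iU].
apply: (@filterS _ _ _ (fun v => Z v \in i)) => [v /iU //|]; clear iU.
move: oi wi; case: i => [[[] a|[]] [[] b|[]]] //= _; rewrite ?in_itv /= ?andbT.
- move=> /andP[aZ Zb]; near=> v; rewrite in_itv /=; apply/andP.
  by split; near: v; [exact: Zgt|exact: Zlt].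
- by move=> aZ; apply: filterS (Zgt a aZ) => v; rewrite in_itv /= andbT.
- by move=> Zb; apply: filterS (Zlt b Zb) => v; rewrite in_itv.
- by move=> _; apply: nearW => v; rewrite in_itv.
Unshelve. all: by end_near.
Qed.

Lemma fin_num_near X w : {for w, continuous X} -> X w \is a fin_num ->
  \forall v \near w, X v \is a fin_num.
Proof.
move=> cX; case Xw: (X w) => [r| |] // _.
have Xr : X @ w --> r%:E by rewrite -Xw; exact: cX.
exact: cvg_is_fine Xr.
Qed.

Lemma fine_continuous X w : {for w, continuous X} -> X w \is a fin_num ->
  fine \o X @ w --> fine (X w).
Proof. by move=> cX Xw; apply: fine_cvg; rewrite fineK //; exact: cX. Qed.

Lemma continuous_le_dense Z (D V : set K) (c : \bar R) :
  continuous Z -> dense D -> open V ->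
  (forall w, V w -> D w -> (Z w <= c)%E) -> forall w, V w -> (Z w <= c)%E.
Proof.
move=> cZ dD oV ZD w Vw; rewrite leNgt; apply/negP => cZw.
have [v [[Vv cZv] Dv]] : (V `&` [set v | (c < Z v)%E]) `&` D !=set0.
  by apply: dD; [exists w|exact: openI (continuous_open_gt _ cZ)].
by move: (ZD v Vv Dv); rewrite leNgt cZv.
Qed.

Lemma clopen_if_continuous (C : set K) Z1 Z2 : clopen C ->
  continuous Z1 -> continuous Z2 ->
  continuous (fun w => if w \in C then Z1 w else Z2 w).
Proof.
move=> [oC cC] c1 c2 w.
have [Cw|nCw] := boolP (w \in C).
- have e : \forall v \near w, Z1 v = (if v \in C then Z1 v else Z2 v).
    apply: filterS (open_nbhs_nbhs (conj oC (set_mem Cw))) => v Cv.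
    by rewrite mem_set.
  by apply: cvg_trans (near_eq_cvg e) _; rewrite /= Cw; exact: c1.
- have e : \forall v \near w, Z2 v = (if v \in C then Z1 v else Z2 v).
    have nC : (~` C) w by move=> Cw; move: nCw; rewrite mem_set.
    apply: filterS (open_nbhs_nbhs (conj (closed_openC cC) nC)) => v nCv.
    by rewrite ifF //; apply/negP => /set_mem.
  by apply: cvg_trans (near_eq_cvg e) _; rewrite /= (negbTE nCw); exact: c2.
Qed.

End ereal_valued_continuity.

Section extremally_disconnected_extension.
Context (R : realType) (K : topologicalType).
Hypothesis ED : extremally_disconnected K.
Variables (G : set K) (phi : K -> \bar R).
Hypotheses (oG : open G) (dG : dense G)
  (cphi : forall w, G w -> {for w, continuous phi}).

Definition upper_envelope (w : K) : \bar R :=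
  ereal_inf [set ereal_sup (phi @` (N `&` G)) | N in nbhs w].

Definition lower_envelope (w : K) : \bar R :=
  ereal_sup [set ereal_inf (phi @` (N `&` G)) | N in nbhs w].

Lemma lower_le_upper_envelope w : (lower_envelope w <= upper_envelope w)%E.
Proof.
apply/ereal_supP => _ [N1 wN1 <-]; apply/ereal_infP => _ [N2 wN2 <-].
have : nbhs w (N1 `&` N2) by exact: filterI.
rewrite nbhsE => -[B [oB Bw] BN].
have [v [Bv Gv]] := dG (ex_intro _ w Bw) oB.
have [N1v N2v] := BN v Bv.
apply: (@le_trans _ _ (phi v)).
- by apply: ereal_inf_lbound; exists v.
- by apply: ereal_sup_ubound; exists v.
Qed.

(* If the envelopes were separated by c at w, the disjoint open sets
   G /\ (phi < c) and G /\ (c < phi) would both accumulate at w; but the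
   closure of the first is open, so it would meet the second. *)
Lemma upper_envelopeE w : upper_envelope w = lower_envelope w.
Proof.
apply/eqP; rewrite eq_le lower_le_upper_envelope andbT leNgt; apply/negP.
move=> /ereal_dense[c /andP[lc cu]].
pose P := G `&` [set v | (phi v < c)%E].
pose Q := G `&` [set v | (c < phi v)%E].
have oP : open P.
  rewrite openE => v [Gv pv]; apply: filterI; first exact: (open_nbhs_nbhs (conj oG Gv)).
  exact: continuous_near_lt (cphi Gv) pv.
have oQ : open Q.
  rewrite openE => v [Gv pv]; apply: filterI; first exact: (open_nbhs_nbhs (conj oG Gv)).
  exact: continuous_near_gt (cphi Gv) pv.
have clP : closure P w.
  move=> B wB; have : (ereal_inf (phi @` (B `&` G)) < c)%E.
    by apply: le_lt_trans lc; apply: ereal_sup_ubound; exists B.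
  by move/ereal_inf_ltP => [_ [v [Bv Gv] <-] pv]; exists v.
have clQ : closure Q w.
  move=> B wB; have : (c < ereal_sup (phi @` (B `&` G)))%E.
    by apply: lt_le_trans cu _; apply: ereal_inf_lbound; exists B.
  by move/ereal_sup_gtP => [_ [v [Bv Gv] <-] pv]; exists v.
have [q [Qq clPq]] := clQ _ (open_nbhs_nbhs (conj (ED oP) clP)).
have [v [[_ Pv] [_ Qv]]] := clPq Q (open_nbhs_nbhs (conj oQ Qq)).
by move: (lt_trans Pv Qv); rewrite ltxx.
Qed.

Lemma upper_envelope_eq w : G w -> upper_envelope w = phi w.
Proof.
move=> Gw; apply/eqP; rewrite eq_le; apply/andP; split.
- rewrite upper_envelopeE; apply/ereal_supP => _ [N wN <-].
  by apply: ereal_inf_lbound; exists w => //; split => //; exact: nbhs_singleton wN.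
- apply/ereal_infP => _ [N wN <-]; apply: ereal_sup_ubound.
  by exists w => //; split => //; exact: nbhs_singleton wN.
Qed.

Lemma upper_envelope_continuous : continuous upper_envelope.
Proof.
move=> w; apply: continuous_from_rays.
- move=> a; rewrite upper_envelopeE => /ereal_sup_gtP [_ [N wN <-] aN].
  move: wN; rewrite nbhsE => -[B [oB Bw] BN].
  apply: filterS (open_nbhs_nbhs (conj oB Bw)) => v Bv.
  have BGN : phi @` (B `&` G) `<=` phi @` (N `&` G).
    by move=> _ [u [Bu Gu] <-]; exists u => //; split => //; exact: BN.
  rewrite upper_envelopeE; apply: (lt_le_trans aN).
  apply: (le_trans (ereal_inf_le_tmp BGN)); apply: ereal_sup_ubound.
  by exists B => //; exact: (open_nbhs_nbhs (conj oB Bv)).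
- move=> b /ereal_inf_ltP [_ [N wN <-] Nb].
  move: wN; rewrite nbhsE => -[B [oB Bw] BN].
  apply: filterS (open_nbhs_nbhs (conj oB Bw)) => v Bv.
  apply: le_lt_trans Nb; apply: (@le_trans _ _ (ereal_sup (phi @` (B `&` G)))).
    by apply: ereal_inf_lbound; exists B => //; exact: (open_nbhs_nbhs (conj oB Bv)).
  apply: ereal_sup_le => _ [u [Bu Gu] <-].
  by exists u => //; split => //; exact: BN.
Qed.

End extremally_disconnected_extension.

Section Cinf_calculus.
Context (R : realType) (K : topologicalType).
Implicit Types (X Y Z : K -> \bar R).

Lemma Cinf_dense_fin_num X : Cinf X -> dense [set w | X w \is a fin_num].
Proof.
move=> [_ ndX] W [w Ww] oW; apply: contrapT => noW.
have WXinf : W `<=` [set v | X v = +oo%E \/ X v = -oo%E].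
  move=> v Wv; case Xv: (X v) => [r| |]; [|by left|by right].
  by exfalso; apply: noW; exists v; rewrite /= Xv.
have : W `<=` (closure [set v | X v = +oo%E \/ X v = -oo%E])°.
  by rewrite -open_subsetE //; apply: subset_trans WXinf _; exact: subset_closure.
by move=> /(_ _ Ww); rewrite ndX.
Qed.

Lemma Cinf_open_fin_num X : Cinf X -> open [set w | X w \is a fin_num].
Proof. by move=> [cX _]; rewrite openE => w /= Xw; exact: fin_num_near (cX w) Xw. Qed.

Lemma Cinf_dense_fin_num2 X Y : Cinf X -> Cinf Y ->
  dense [set w | X w \is a fin_num /\ Y w \is a fin_num].
Proof.
by move=> CX CY; apply: denseI; [exact: Cinf_open_fin_num|exact: Cinf_dense_fin_num..].
Qed.

Lemma Cinf_open_fin_num2 X Y : Cinf X -> Cinf Y ->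
  open [set w | X w \is a fin_num /\ Y w \is a fin_num].
Proof. by move=> CX CY; apply: openI; exact: Cinf_open_fin_num. Qed.

Lemma Cinf_dense_fin Z (G : set K) : continuous Z -> open G -> dense G ->
  (forall w, G w -> Z w \is a fin_num) -> Cinf Z.
Proof.
move=> cZ oG dG GZ; split => //; apply/seteqP; split => // v.
rewrite /interior /= nbhsE => -[B [oB Bv] BZinf].
have [u [Bu Gu]] := dG B (ex_intro _ v Bv) oB.
have : closure (~` G) u.
  apply: closureS (BZinf u Bu) => t [Zt|Zt] Gt; by have := GZ t Gt; rewrite Zt.
have <- : ~` G = closure (~` G) by apply/closure_id; exact: open_closedC.
by [].
Qed.

Lemma Cinf_extension (G : set K) (phi : K -> \bar R) :
  extremally_disconnected K -> open G -> dense G ->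
  (forall w, G w -> {for w, continuous phi} /\ phi w \is a fin_num) ->
  exists Z, Cinf Z /\ forall w, G w -> Z w = phi w.
Proof.
move=> ED oG dG Gphi; exists (upper_envelope G phi).
have phiE w : G w -> upper_envelope G phi w = phi w.
  by apply: upper_envelope_eq => // v /Gphi[].
split => //; apply: (Cinf_dense_fin _ oG dG).
- by apply: upper_envelope_continuous => // v /Gphi[].
- by move=> w Gw; rewrite phiE //; case: (Gphi w Gw).
Qed.

Lemma cinf_chooseP (P : set (K -> \bar R)) : P !=set0 -> P (cinf_choose P).
Proof. by move=> [Z PZ]; apply: epsilon_spec; exists Z. Qed.

Lemma cinf_subP X Y : extremally_disconnected K -> Cinf X -> Cinf Y ->
  Cinf (cinf_sub X Y) /\ forall w, X w \is a fin_num -> Y w \is a fin_num ->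
    cinf_sub X Y w = (X w - Y w)%E.
Proof.
move=> ED CX CY; rewrite /cinf_sub; set P := (S in cinf_choose S).
apply: (@cinf_chooseP P).
pose phi w := (fine (X w) - fine (Y w))%:E.
have [|Z [CZ ZE]] := Cinf_extension (phi := phi) ED (Cinf_open_fin_num2 CX CY)
    (Cinf_dense_fin_num2 CX CY).
  move=> w [Xw Yw]; split => //; apply: cvg_EFin; first exact: nearW.
  by apply: cvgB; [exact: fine_continuous (proj1 CX w) Xw|
                   exact: fine_continuous (proj1 CY w) Yw].
by exists Z; split => // w Xw Yw; rewrite ZE // /phi EFinB !fineK.
Qed.

Lemma cinf_compP (f : R -> R) X : extremally_disconnected K -> continuous f ->
  Cinf X -> Cinf (cinf_comp f X) /\ forall w, X w \is a fin_num ->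
    cinf_comp f X w = (f (fine (X w)))%:E.
Proof.
move=> ED cf CX; rewrite /cinf_comp; set P := (S in cinf_choose S).
apply: (@cinf_chooseP P).
pose phi w := (f (fine (X w)))%:E.
have [|Z [CZ ZE]] := Cinf_extension (phi := phi) ED (Cinf_open_fin_num CX)
    (Cinf_dense_fin_num CX).
  move=> w Xw; split => //; apply: cvg_EFin; first exact: nearW.
  exact: continuous_cvg (cf _) (fine_continuous (proj1 CX w) Xw).
by exists Z; split => // w Xw; rewrite ZE.
Qed.

End Cinf_calculus.

Lemma continuous_at_dist_le (R : realType) (f : R -> R) (t : R) (del : R) :
  {for t, continuous f} -> 0 < del ->
  exists2 eta : R, 0 < eta & forall p q, `|t - p| < eta -> `|t - q| < eta ->
    `|f p - f q| <= del.
Proof.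
move=> cf del0; have del20 : 0 < del / 2 by rewrite divr_gt0.
have /nbhs_ballP[eta eta0 feta] :=
  @cvgr_dist_lt _ _ _ _ (nbhs_filter t) f (f t) cf _ del20.
exists eta => // p q tp tq; have fp := feta p tp; have fq := feta q tq.
rewrite -(subrKA (f t)) (le_trans (ler_normD _ _)) // distrC; lra.
Qed.

Section locally_null.
Context (R : realType) (K : topologicalType).
Implicit Types (s t : nat -> K -> \bar R).

(* For continuous functions on an extremally disconnected space this local
   condition is equivalent to order convergence to 0. *)
Definition locally_null s : Prop :=
  forall U : set K, open U -> U !=set0 -> forall eps : R, 0 < eps ->
    exists m, exists2 V : set K, [/\ open V, V !=set0 & V `<=` U] &
      forall n, (m <= n)%N -> forall w, V w -> (`|s n w| <= eps%:E)%E.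

Lemma locally_nullW s t : (forall n w, (`|t n w| <= `|s n w|)%E) ->
  locally_null s -> locally_null t.
Proof.
move=> ts s0 U oU U0 eps eps0; have [m [V VU sV]] := s0 U oU U0 eps eps0.
by exists m; exists V => // n mn w Vw; apply: le_trans (ts n w) (sV n mn w Vw).
Qed.

Lemma locally_null_min1 s :
  locally_null (fun n w => Order.min `|s n w|%E 1%E) -> locally_null s.
Proof.
move=> s0 U oU U0 eps eps0; pose e := Order.min eps (2^-1).
have e0 : 0 < e by rewrite lt_min eps0 invr_gt0 ltr0n.
have e1 : e < 1 by rewrite gt_min invf_lt1 ?ltr0n ?ltr1n ?orbT.
have [m [V VU sV]] := s0 U oU U0 e e0; exists m; exists V => // n mn w Vw.
have := sV n mn w Vw; rewrite gee0_abs ?le_min ?abse_ge0 ?lee01 //.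
rewrite ge_min => /orP[se|]; last by rewrite lee_fin leNgt e1.
by apply: le_trans se _; rewrite lee_fin ge_min lexx.
Qed.

End locally_null.

Section order_null_in_ideal.
Context (R : realType) (K : topologicalType).
Hypothesis ED : extremally_disconnected K.
Variable F : set (K -> \bar R).
Hypotheses (FC : F `<=` @Cinf R K) (F1 : F (fun _ => 1%E))
  (Fsolid : forall X Y, Cinf Y -> F X -> (forall w, (`|Y w| <= `|X w|)%E) -> F Y).

(* Otherwise [eps] times the indicator of the clopen set [closure U] would be
   a positive lower bound of the net in [F]. *)
Lemma inf0_net_lt (D : Type) (y : D -> K -> \bar R) :
  (forall a, F (y a)) -> (forall a w, (0 <= y a w)%E) ->
  (forall h, F h -> (forall a w, (h w <= y a w)%E) -> forall w, (h w <= 0)%E) ->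
  forall U : set K, open U -> U !=set0 -> forall eps : R, 0 < eps ->
    exists a, exists2 v, U v & (y a v < eps%:E)%E.
Proof.
move=> Fy y0 yinf U oU [v0 Uv0] eps eps0; apply: contrapT => ylow.
pose e := Order.min eps 1.
have e0 : 0 < e by rewrite lt_min eps0 ltr01.
have yUe a v : U v -> (e%:E <= y a v)%E.
  move=> Uv; rewrite leNgt; apply/negP => yv; apply: ylow; exists a, v => //.
  by apply: lt_le_trans yv _; rewrite lee_fin ge_min lexx.
have clU : clopen (closure U) by split; [exact: ED|exact: closed_closure].
pose h w := if w \in closure U then e%:E else 0%E.
have Ch : Cinf h.
  apply: (Cinf_dense_fin (G := setT)).
  - by apply: clopen_if_continuous => //; exact: cst_continuous.
  - exact: openT.
  - by move=> W [w Ww] _; exists w.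
  - by move=> w _; rewrite /h; case: ifP.
have Fh : F h.
  apply: (Fsolid Ch F1) => w; rewrite /h; case: ifP => _; rewrite /= lee_fin normr1.
    by rewrite ger0_norm ?ge_min ?lexx ?orbT // ltW.
  by rewrite normr0.
have hy a w : (h w <= y a w)%E.
  rewrite /h; case: ifPn => [/set_mem clUw|_]; last exact: y0.
  rewrite leNgt; apply/negP => /(continuous_near_lt (proj1 (FC (Fy a)) w)).
  by move=> /clUw[v [Uv yv]]; move: (yUe a v Uv); rewrite leNgt yv.
have := yinf h Fh hy v0; rewrite /h mem_set; last exact: subset_closure.
by rewrite lee_fin leNgt e0.
Qed.

Lemma order_null_locally_null s : order_null F s -> locally_null s.
Proof.
move=> [D [_ [y [_ [_ [_ [_ [Fy [_ [y0 [yinf ydom]]]]]]]]]]] U oU U0 eps eps0.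
have [a [v Uv yv]] := inf0_net_lt Fy y0 yinf oU U0 eps0.
have [m sy] := ydom a.
exists m; exists (U `&` [set w | (y a w < eps%:E)%E]).
  split; [|by exists v|exact: subIsetl].
  by apply: openI oU _; exact: continuous_open_lt (proj1 (FC (Fy a))).
by move=> n mn w [_ yw]; apply/ltW/(le_lt_trans (sy n mn w)).
Qed.

End order_null_in_ideal.

(* Near a point where [x] is finite, [f] has small oscillation, and on the
   dense set where [xs n] and [x] are both finite the difference
   [f o xs n - f o x] is computed pointwise. *)
Lemma locally_null_comp (R : realType) (K : topologicalType) (f : R -> R)
    (xs : nat -> K -> \bar R) (x : K -> \bar R) :
  extremally_disconnected K -> continuous f ->
  (forall n, Cinf (xs n)) -> Cinf x ->
  locally_null (fun n => cinf_sub (xs n) x) ->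
  locally_null (fun n => cinf_sub (cinf_comp f (xs n)) (cinf_comp f x)).
Proof.
move=> ED cf Cxs Cx xs_null U oU U0 del del0.
have [CfX fXE] := cinf_compP ED cf Cx.
have [w1 [Uw1 xw1]] := Cinf_dense_fin_num Cx U0 oU.
pose t := fine (x w1).
have [eta eta0 feta] := continuous_at_dist_le (cf t) del0.
have eta20 : 0 < eta / 2 by rewrite divr_gt0.
pose U1 := (U `&` [set v | x v \is a fin_num /\ `|t - fine (x v)| < eta / 2])°.
have U1w1 : U1 w1.
  apply: filterI; first exact: open_nbhs_nbhs (conj oU Uw1).
  apply: filterI; first exact: fin_num_near (proj1 Cx w1) xw1.
  exact: cvgr_dist_lt _ _ (fine_continuous (proj1 Cx w1) xw1) _ eta20.
have [m [V [oV V0 VU1] xs_small]] :=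
  xs_null U1 (@open_interior _ _) (ex_intro _ w1 U1w1) _ eta20.
exists m; exists V.
  by split => // v /VU1/interior_subset[].
move=> n mn; have [CfXn fXnE] := cinf_compP ED cf (Cxs n).
have [Cg gE] := cinf_subP ED CfXn CfX.
apply: (continuous_le_dense _ (Cinf_dense_fin_num2 (Cxs n) Cx) oV).
  by move=> w; apply: continuous_comp (proj1 Cg w) (@abse_continuous R _).
move=> v Vv [xnv xv].
have [_ [_ tq]] := interior_subset (VU1 v Vv).
have pq : `|fine (xs n v) - fine (x v)| <= eta / 2.
  move: (xs_small n mn v Vv); rewrite (proj2 (cinf_subP ED (Cxs n) Cx)) //.
  case: (xs n v) xnv => [p| |] //; case: (x v) xv => [q| |] //= _ _;
  by rewrite lee_fin.
rewrite gE ?fXnE ?fXE // -EFinB /= lee_fin; apply: feta; last lra.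
have := ler_distD (fine (x v)) t (fine (xs n v)).
by rewrite (distrC (fine (x v))); lra.
Qed.

Section null_majorant.
Context (R : realType) (K : topologicalType).
Hypothesis ED : extremally_disconnected K.
Variables (s : nat -> K -> \bar R) (u : K -> \bar R).
Hypotheses (cs : forall n, continuous (s n)) (s_ge0 : forall n w, (0 <= s n w)%E)
  (s_le_u : forall n w, (s n w <= u w)%E) (Cu : Cinf u).

Definition eventually_below (p : R * nat) : set K :=
  [set w | forall n, (p.2 <= n)%N -> (s n w <= p.1%:E)%E].

Definition below_region (p : R * nat) : set K := closure (eventually_below p)°.

Definition below_cap (p : R * nat) (w : K) : \bar R :=
  if w \in below_region p then p.1%:E else u w.

(* The majorants form a net indexed by finite lists of caps, directed by
   inclusion. *)
Definition majorant (L : seq (R * nat)) : K -> \bar R :=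
  foldr (fun p z w => Order.min (below_cap p w) (z w)) u L.

Definition majorant_index (L : seq (R * nat)) : nat := \max_(p <- L) p.2.

Lemma below_region_sub p : below_region p `<=` eventually_below p.
Proof.
move=> w clw n pn; rewrite leNgt; apply/negP => /(continuous_near_gt (@cs n w)).
move=> /clw[v [/interior_subset/(_ n pn) sv vs]].
by move: sv; rewrite leNgt vs.
Qed.

Lemma below_region_clopen p : clopen (below_region p).
Proof. by split; [exact: ED (@open_interior _ _)|exact: closed_closure]. Qed.

Lemma below_cap_continuous p : continuous (below_cap p).
Proof.
apply: clopen_if_continuous (below_region_clopen p) _ (proj1 Cu).
exact: cst_continuous.
Qed.

Lemma le_below_cap n p w : (p.2 <= n)%N -> (s n w <= below_cap p w)%E.
Proof.
move=> pn; rewrite /below_cap; case: ifPn => [/set_mem/below_region_sub|_].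
  exact.
exact: s_le_u.
Qed.

Lemma majorant_continuous L : continuous (majorant L).
Proof.
elim: L => [|p L IH] /=; first exact: (proj1 Cu).
by apply: min_fun_continuous; [exact: below_cap_continuous|exact: IH].
Qed.

Lemma majorant_le_u L w : (majorant L w <= u w)%E.
Proof. by elim: L => [|p L IH] /=; [exact: lexx|rewrite ge_min IH orbT]. Qed.

Lemma majorant_le_below_cap L p w : p \in L -> (majorant L w <= below_cap p w)%E.
Proof.
elim: L => [|q L IH] //=; rewrite inE ge_min => /orP[/eqP->|pL].
  by rewrite lexx.
by rewrite IH // orbT.
Qed.

Lemma le_majorant L n w : (majorant_index L <= n)%N -> (s n w <= majorant L w)%E.
Proof.
elim: L => [|p L IH] /=; first by move=> _; exact: s_le_u.
rewrite /majorant_index big_cons geq_max => /andP[pn Ln].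
by rewrite le_min le_below_cap // IH.
Qed.

Lemma majorant_ge0 L w : (0 <= majorant L w)%E.
Proof. exact: le_trans (@s_ge0 (majorant_index L) w) (le_majorant w (leqnn _)). Qed.

Lemma majorant_subset L1 L2 : {subset L1 <= L2} ->
  forall w, (majorant L2 w <= majorant L1 w)%E.
Proof.
elim: L1 => [|p L1 IH] L12 w /=; first exact: majorant_le_u.
rewrite le_min majorant_le_below_cap ?L12 ?mem_head //=.
by apply: IH => q qL1; apply: L12; rewrite inE qL1 orbT.
Qed.

Lemma Cinf_majorant L : Cinf (majorant L).
Proof.
split; first exact: majorant_continuous.
apply/seteqP; split => // v; rewrite -(proj2 Cu); apply: interiorS; apply: closureS.
move=> w [Linf|Linf]; last by have := @majorant_ge0 L w; rewrite Linf.
by left; have := majorant_le_u L w; rewrite Linf leye_eq => /eqP.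
Qed.

(* A lower bound [h] exceeding [del] somewhere exceeds it on an open set [U];
   local nullity yields an open [V] inside [U] where eventually [s n <= del],
   so [V] lies in a [below_region] and the corresponding cap is [del] on [V]. *)
Lemma majorant_inf0 : locally_null s ->
  forall h, Cinf h -> (forall L w, (h w <= majorant L w)%E) -> forall w, (h w <= 0)%E.
Proof.
move=> s_null h Ch h_le w0; rewrite leNgt; apply/negP.
move=> /ereal_dense[c /andP[c0 ch]].
have [del cE] : exists del : R, c = del%:E.
  by move: c0 ch; case: c => [r| |] //; [exists r|move=> _; rewrite ltNge leey].
rewrite cE lte_fin in c0; rewrite cE in ch.
have oU := continuous_open_gt del%:E (proj1 Ch).
have [m [V [oV [v Vv] VU] sV]] := s_null _ oU (ex_intro _ w0 ch) del c0.
have VA : V `<=` eventually_below (del, m).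
  by move=> w Vw n mn; apply: le_trans (lee_abs _) (sV n mn w Vw).
have vC : below_region (del, m) v.
  by apply: subset_closure; move: VA; rewrite (open_subsetE _ oV); apply.
have := le_trans (h_le [:: (del, m)] v)
  (majorant_le_below_cap v (mem_head (del, m) [::])).
by rewrite /below_cap mem_set //= leNgt VU.
Qed.

Lemma locally_null_order_null : locally_null s -> order_null (@Cinf R K) s.
Proof.
move=> s_null; exists (seq (R * nat)), (fun L1 L2 => {subset L1 <= L2}), majorant.
split; first exact: (inhabits [::]).
split; first by move=> L p.
split; first by move=> L1 L2 L3 L12 L23 p /L12/L23.
split.
  by move=> L1 L2; exists (L1 ++ L2); split => p; rewrite mem_cat => ->; rewrite ?orbT.
split; first exact: Cinf_majorant.
split; first exact: majorant_subset.
split; first exact: majorant_ge0.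
split; first exact: majorant_inf0.
move=> L; exists (majorant_index L) => n Ln w.
by rewrite gee0_abs ?s_ge0 // le_majorant.
Qed.

End null_majorant.

Theorem mainTheorem8 (R : realType) (K : topologicalType)
    (E : set (K -> \bar R)) (f : R -> R)
    (xs : nat -> K -> \bar R) (x : K -> \bar R) :
  compact [set: K] -> hausdorff_space K -> extremally_disconnected K ->
  order_dense_ideal E -> E (fun _ => 1%E) ->
  continuous f ->
  (forall n, E (xs n)) -> E x ->
  uo_conv E xs x ->
  uo_conv (@Cinf R K) (fun n => cinf_comp f (xs n)) (cinf_comp f x).
Proof.
move=> _ _ ED [EC [_ [_ [_ [Esolid _]]]]] E1 cf Exs Ex xs_uo u Cu u0.
have Cxs n : Cinf (xs n) := EC _ (Exs n).
have Cx : Cinf x := EC _ Ex.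
pose g n := cinf_sub (cinf_comp f (xs n)) (cinf_comp f x).
have Cg n : Cinf (g n).
  exact: (cinf_subP ED (cinf_compP ED cf (Cxs n)).1 (cinf_compP ED cf Cx).1).1.
apply: (locally_null_order_null ED _ _ _ Cu).
- move=> n; apply: min_fun_continuous (proj1 Cu) => w.
  exact: continuous_comp (proj1 (Cg n) w) (@abse_continuous R _).
- by move=> n w; rewrite le_min abse_ge0 u0.
- by move=> n w; rewrite ge_min lexx orbT.
- apply: (@locally_nullW _ _ g).
    by move=> n w; rewrite gee0_abs ?le_min ?abse_ge0 ?u0 // ge_min lexx.
  apply: locally_null_comp => //; apply: locally_null_min1.
  apply: (order_null_locally_null ED EC E1 Esolid).
  exact: xs_uo (fun _ => 1%E) E1 (fun _ => lee01).
Qed.
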